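(* Consider two CDNs, $CDN_1$ and $CDN_2$, with performance parameters $0\le \beta_1<\beta_2<1$, competing by prices in the model described in the context. Let $(w_1^*,w_2^* )$ be a Nash equilibrium in prices at which both CDNs attract a set of content providers of positive measure, and let $J_k^*=J_k(w_1^*,w_2^* )$ be the equilibrium revenues. Then $$J_1^*>4J_2^*.$$
   Context: Each $CDN_k$ ($k=1,2$) has a fixed performance parameter $\beta_k\in[0,1)$ (ratio of new to old user latency; smaller is better) and announces a price $w_k\ge 0$. There is a continuum of content providers of total mass $\Lambda>0$ whose sensitivity parameters $\theta$ are uniformly distributed on $[0,1]$. A content provider with sensitivity $\theta$ that hires $CDN_k$ obtains payoff $U(\theta,k)=\theta(1-\beta_k)-w_k$; hiring no CDN gives payoff $0$. Each content provider hires at most one CDN and chooses an option (a CDN or none) of maximum payoff (indifferent providers form a set of measure zero in the situations considered). $\Lambda_k(w_1,w_2)$ is $\Lambda$ times the measure of the set of $\theta\in[0,1]$ choosing $CDN_k$, and the revenue of $CDN_k$ is $J_k(w_1,w_2)=\Lambda_k(w_1,w_2)\,w_k$. A Nash equilibrium is a pair $(w_1^*,w_2^* )$ such that $J_1(w_1^*,w_2^* )\ge J_1(w_1,w_2^* )$ for all $w_1\ge0$ and $J_2(w_1^*,w_2^* )\ge J_2(w_1^*,w_2)$ for all $w_2\ge 0$. *)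

From mathcomp Require Import all_boot all_order all_algebra.
From mathcomp Require Import all_classical all_reals all_analysis.
Set Implicit Arguments. Unset Strict Implicit. Unset Printing Implicit Defensive.
Import Order.TTheory GRing.Theory Num.Theory.
Local Open Scope classical_set_scope.
Local Open Scope ring_scope.

Definition payoff {R : realType} (b w th : R) : R := th * (1 - b) - w.

(* Indifferent providers form a null set. *)
Definition choosers {R : realType} (b w b' w' : R) : set R :=
  [set th | 0 <= th <= 1 /\ payoff b' w' th < payoff b w th /\ 0 < payoff b w th].

Definition demand {R : realType} (Lam b w b' w' : R) : R :=
  Lam * fine (@lebesgue_measure R (choosers b w b' w')).

Definition revenue {R : realType} (Lam b w b' w' : R) : R :=
  demand Lam b w b' w' * w.

Definition nash_eq {R : realType} (Lam b1 b2 w1 w2 : R) : Prop :=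
  0 <= w1 /\ 0 <= w2 /\
  (forall w, 0 <= w -> revenue Lam b1 w b2 w2 <= revenue Lam b1 w1 b2 w2) /\
  (forall w, 0 <= w -> revenue Lam b2 w b1 w1 <= revenue Lam b2 w2 b1 w1).

(* Providers sort themselves by sensitivity.  Write d = b2 - b1, let t = (w1 - w2)/d be
   the sensitivity at which a provider is indifferent between the two CDNs and
   s = w2/(1 - b2) the one at which CDN2 breaks even: CDN1 serves ]t, 1] and CDN2
   serves ]s, t[.  Near the equilibrium CDN1's revenue is the concave parabola
   Lam (d + w2 - w) w / d in its own price w, so by Fermat's rule 2 w1 = d + w2.
   Then J1 = Lam w1^2 / d and J2 = Lam (t - s) w2, whence
   d (J1 - 4 J2) / Lam = (w1 - 2 w2)^2 + 4 d s w2, which is positive since w2 = 0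
   forces w1 = d/2 > 0. *)
From mathcomp Require Import all_boot all_order all_algebra.
From mathcomp Require Import all_classical all_reals all_analysis.
From mathcomp Require Import ring lra.
Set Implicit Arguments.
Unset Strict Implicit.
Import Order.TTheory GRing.Theory Num.Theory numFieldNormedType.Exports.
Local Open Scope classical_set_scope.
Local Open Scope ring_scope.

Lemma parabola_max_vertex (R : realFieldType) (A a b c : R) :
  c \in `]a, b[ -> (forall w, w \in `]a, b[ -> (A - w) * w <= (A - c) * c) ->
  A = 2 * c.
Proof.
move=> cab cmax.
have der (x : R) : is_derive x (1 : R) (fun w : R => (A - w) * w) (A - 2 * x).
  by apply: is_derive_eq; rewrite /GRing.scale /=; ring.
have ab : a <= b.
  by move: cab; rewrite in_itv /= => /andP[ac cb]; exact/ltW/(lt_trans ac cb).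
have D0 := derive1_at_max ab (fun x _ => @ex_derive _ _ _ _ _ _ _ (der x)) cab cmax.
have := @derive_val _ _ _ _ _ _ _ D0.
by rewrite (@derive_val _ _ _ _ _ _ _ (der c)) => /eqP; rewrite subr_eq0 => /eqP.
Qed.

Lemma fine_lebesgue_itv (R : realType) (x y : bool) (a b : R) : a <= b ->
  fine (lebesgue_measure [set` Interval (BSide x a) (BSide y b)]) = b - a.
Proof.
rewrite lebesgue_measure_itv /= lte_fin le_eqVlt => /orP[/eqP ->|->] //.
by rewrite ltxx subrr.
Qed.

Lemma demand_gt0_choosers (R : realType) (Lam b w b' w' : R) :
  0 < demand Lam b w b' w' -> choosers b w b' w' !=set0.
Proof.
move=> dem_gt0; apply/set0P/eqP => no_chooser.
by move: dem_gt0; rewrite /demand no_chooser measure0 mulr0 ltxx.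
Qed.

Definition switch_point {R : fieldType} (b1 w1 b2 w2 : R) := (w1 - w2) / (b2 - b1).

Definition entry_point {R : fieldType} (b w : R) := w / (1 - b).

Section Duopoly.
Variables (R : realType) (Lam b1 b2 : R).
Hypotheses (d_gt0 : 0 < b2 - b1) (c_gt0 : 0 < 1 - b2).

Lemma switch_pointP (w1 w2 : R) : w1 - w2 = switch_point b1 w1 b2 w2 * (b2 - b1).
Proof. by rewrite mulfVK // gt_eqF. Qed.

Lemma entry_pointP (w : R) : w = entry_point b2 w * (1 - b2).
Proof. by rewrite mulfVK // gt_eqF. Qed.

Lemma entry_point_ge0 (w : R) : 0 <= w -> 0 <= entry_point b2 w.
Proof. by move=> w_ge0; rewrite divr_ge0 // ltW. Qed.

Lemma payoff_better_ltE (w1 w2 th : R) :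
  (payoff b2 w2 th < payoff b1 w1 th) = (switch_point b1 w1 b2 w2 < th).
Proof.
rewrite /payoff -subr_gt0.
have -> : th * (1 - b1) - w1 - (th * (1 - b2) - w2) =
          (th - switch_point b1 w1 b2 w2) * (b2 - b1).
  by rewrite mulrBl -switch_pointP; ring.
by rewrite pmulr_lgt0 // subr_gt0.
Qed.

Lemma payoff_worse_ltE (w1 w2 th : R) :
  (payoff b1 w1 th < payoff b2 w2 th) = (th < switch_point b1 w1 b2 w2).
Proof.
rewrite /payoff -subr_gt0.
have -> : th * (1 - b2) - w2 - (th * (1 - b1) - w1) =
          (switch_point b1 w1 b2 w2 - th) * (b2 - b1).
  by rewrite mulrBl -switch_pointP; ring.
by rewrite pmulr_lgt0 // subr_gt0.
Qed.

Lemma payoff_worse_gt0E (w th : R) : (0 < payoff b2 w th) = (entry_point b2 w < th).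
Proof. by rewrite /payoff {1}(entry_pointP w) -mulrBl pmulr_lgt0 // subr_gt0. Qed.

Lemma choosers_better_sub (w1 w2 : R) :
  choosers b1 w1 b2 w2 `<=` [set` `]switch_point b1 w1 b2 w2, 1]].
Proof.
move=> th [/andP[_ th_le1] [+ _]].
by rewrite payoff_better_ltE /= in_itv /= th_le1 andbT.
Qed.

Lemma choosers_worse_sub (w1 w2 : R) :
  choosers b2 w2 b1 w1 `<=`
  [set` `]entry_point b2 w2, switch_point b1 w1 b2 w2[].
Proof.
move=> th [_ []]; rewrite payoff_worse_ltE payoff_worse_gt0E /= in_itv /=.
by move=> -> ->.
Qed.

Lemma choosers_better_eq (w1 w2 : R) :
  0 <= entry_point b2 w2 <= switch_point b1 w1 b2 w2 ->
  choosers b1 w1 b2 w2 = [set` `]switch_point b1 w1 b2 w2, 1]].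
Proof.
move=> /andP[s_ge0 s_le_t]; apply/seteqP; split; first exact: choosers_better_sub.
move=> th; rewrite /= in_itv /= => /andP[t_lt_th th_le1].
have pref : payoff b2 w2 th < payoff b1 w1 th by rewrite payoff_better_ltE.
have pos : 0 < payoff b2 w2 th by rewrite payoff_worse_gt0E; lra.
by split; [apply/andP; split|split]; lra.
Qed.

Lemma choosers_worse_eq (w1 w2 : R) :
  0 <= entry_point b2 w2 -> switch_point b1 w1 b2 w2 <= 1 ->
  choosers b2 w2 b1 w1 =
  [set` `]entry_point b2 w2, switch_point b1 w1 b2 w2[].
Proof.
move=> s_ge0 t_le1; apply/seteqP; split; first exact: choosers_worse_sub.
move=> th; rewrite /= in_itv /= => /andP[s_lt_th th_lt_t].
rewrite /choosers /= payoff_worse_ltE payoff_worse_gt0E.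
by split; [apply/andP; split|split]; lra.
Qed.

Lemma demand_better (w1 w2 : R) :
  0 <= entry_point b2 w2 <= switch_point b1 w1 b2 w2 -> switch_point b1 w1 b2 w2 <= 1 ->
  demand Lam b1 w1 b2 w2 = Lam * (1 - switch_point b1 w1 b2 w2).
Proof.
by move=> s_le_t t_le1; rewrite /demand choosers_better_eq // fine_lebesgue_itv.
Qed.

Lemma demand_worse (w1 w2 : R) :
  0 <= entry_point b2 w2 <= switch_point b1 w1 b2 w2 -> switch_point b1 w1 b2 w2 <= 1 ->
  demand Lam b2 w2 b1 w1 = Lam * (switch_point b1 w1 b2 w2 - entry_point b2 w2).
Proof.
move=> /andP[s_ge0 s_le_t] t_le1.
by rewrite /demand choosers_worse_eq // fine_lebesgue_itv.
Qed.

Lemma switch_point_lt1 (w1 w2 : R) :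
  0 < demand Lam b1 w1 b2 w2 -> switch_point b1 w1 b2 w2 < 1.
Proof.
move=> /demand_gt0_choosers [th /choosers_better_sub]; rewrite /= in_itv /=.
by move=> /andP[t_lt_th th_le1]; exact: lt_le_trans t_lt_th th_le1.
Qed.

Lemma entry_point_lt_switch_point (w1 w2 : R) :
  0 < demand Lam b2 w2 b1 w1 -> entry_point b2 w2 < switch_point b1 w1 b2 w2.
Proof.
move=> /demand_gt0_choosers [th /choosers_worse_sub]; rewrite /= in_itv /=.
by move=> /andP[s_lt_th th_lt_t]; exact: lt_trans s_lt_th th_lt_t.
Qed.

Lemma revenue_better (w w2 : R) :
  0 <= entry_point b2 w2 <= switch_point b1 w b2 w2 -> switch_point b1 w b2 w2 <= 1 ->
  revenue Lam b1 w b2 w2 = Lam / (b2 - b1) * ((b2 - b1 + w2 - w) * w).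
Proof.
move=> s_le_t t_le1; rewrite /revenue demand_better // /switch_point.
by field; rewrite gt_eqF.
Qed.

Lemma best_response_better (w1 w2 : R) : 0 < Lam -> 0 <= w2 ->
  entry_point b2 w2 < switch_point b1 w1 b2 w2 -> switch_point b1 w1 b2 w2 < 1 ->
  (forall w, 0 <= w -> revenue Lam b1 w b2 w2 <= revenue Lam b1 w1 b2 w2) ->
  2 * w1 = b2 - b1 + w2.
Proof.
move=> Lam_gt0 w2_ge0 s_lt_t t_lt1 best.
have s_ge0 := entry_point_ge0 w2_ge0.
(* On this price interval the switch point of CDN1 stays in ]s, 1[. *)
apply/esym/(@parabola_max_vertex _ _ (w2 + entry_point b2 w2 * (b2 - b1))
  (w2 + (b2 - b1))) => [|w]; rewrite in_itv /=.
  have := switch_pointP w1 w2.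
  have := ltr_pM2r d_gt0 (entry_point b2 w2) (switch_point b1 w1 b2 w2).
  have := ltr_pM2r d_gt0 (switch_point b1 w1 b2 w2) 1.
  rewrite s_lt_t t_lt1 mul1r => td_lt_d sd_lt_td t_def.
  by apply/andP; split; lra.
move=> /andP[lo hi].
have s_le_tw : 0 <= entry_point b2 w2 <= switch_point b1 w b2 w2.
  by rewrite s_ge0 ler_pdivlMr //; lra.
have tw_le1 : switch_point b1 w b2 w2 <= 1 by rewrite ler_pdivrMr // mul1r; lra.
have w_ge0 : 0 <= w by have := mulr_ge0 s_ge0 (ltW d_gt0); lra.
have := best w w_ge0.
have s_le_t : 0 <= entry_point b2 w2 <= switch_point b1 w1 b2 w2.
  by rewrite s_ge0 ltW.
by rewrite !revenue_better ?(ltW t_lt1) // ler_pM2l // divr_gt0.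
Qed.

End Duopoly.

Lemma equilibrium_revenue_gap (R : realFieldType) (d c w1 w2 t s : R) :
  0 < d -> 0 < c -> 0 <= w2 -> w1 - w2 = t * d -> w2 = s * c -> 2 * w1 = d + w2 ->
  4 * ((t - s) * w2) < (1 - t) * w1.
Proof.
move=> d_gt0 c_gt0 w2_ge0 t_def s_def foc; rewrite -(ltr_pM2r d_gt0).
have -> : (1 - t) * w1 * d = w1 ^+ 2.
  have marginal : d - (w1 - w2) = w1 by lra.
  by rewrite mulrAC mulrBl mul1r -t_def marginal expr2.
have -> : 4 * ((t - s) * w2) * d = 4 * w2 * (t * d) - 4 * (s * d * w2) by ring.
rewrite -t_def.
have := sqr_ge0 (w1 - 2 * w2).
move: w2_ge0; rewrite le_eqVlt => /predU1P[w2_0 | w2_gt0].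
  by rewrite -w2_0 in foc *; nra.
have s_gt0 : 0 < s by rewrite -(pmulr_lgt0 _ c_gt0) -s_def.
have := mulr_gt0 (mulr_gt0 s_gt0 d_gt0) w2_gt0.
nra.
Qed.

Theorem theorem1 (R : realType) (Lam b1 b2 w1 w2 : R) :
  0 < Lam -> 0 <= b1 -> b1 < b2 -> b2 < 1 ->
  nash_eq Lam b1 b2 w1 w2 ->
  0 < demand Lam b1 w1 b2 w2 -> 0 < demand Lam b2 w2 b1 w1 ->
  revenue Lam b1 w1 b2 w2 > 4 * revenue Lam b2 w2 b1 w1.
Proof.
move=> Lam_gt0 _ b12 b2_lt1 [_ [w2_ge0 [best1 _]]] dem1_gt0 dem2_gt0.
have d_gt0 : 0 < b2 - b1 by rewrite subr_gt0.
have c_gt0 : 0 < 1 - b2 by rewrite subr_gt0.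
have s_ge0 := entry_point_ge0 c_gt0 w2_ge0.
have t_lt1 := switch_point_lt1 d_gt0 dem1_gt0.
have s_lt_t := entry_point_lt_switch_point d_gt0 c_gt0 dem2_gt0.
have foc := best_response_better d_gt0 c_gt0 Lam_gt0 w2_ge0 s_lt_t t_lt1 best1.
have s_le_t : 0 <= entry_point b2 w2 <= switch_point b1 w1 b2 w2.
  by rewrite s_ge0 ltW.
rewrite /revenue (demand_better _ d_gt0 c_gt0 s_le_t (ltW t_lt1)).
rewrite (demand_worse _ d_gt0 c_gt0 s_le_t (ltW t_lt1)).
rewrite -mulrA mulrCA -mulrA ltr_pM2l //.
exact: equilibrium_revenue_gap d_gt0 c_gt0 w2_ge0
  (switch_pointP d_gt0 w1 w2) (entry_pointP c_gt0 w2) foc.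
Qed.
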